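(* Let $(G,\mathcal{P}_G)$ be a pinned graph and let $(H,\mathcal{P}_H)$ be a pinned subgraph of it. If $(G,\mathcal{P}_G)$ is $k$-admissible, then $(H,\mathcal{P}_H)$ is $k$-admissible.
   Context: A pinned graph $(G,\mathcal{P})$ is a finite simple graph $G=(\mathcal{V},\mathcal{E})$ together with a set $\mathcal{P}\subset\mathcal{V}$ of pinned vertices, no two of which are adjacent; $m=|\mathcal{P}|$. $(H,\mathcal{P}_H)$ is a pinned subgraph of $(G,\mathcal{P}_G)$ if $H$ is an induced subgraph of $G$ and $\mathcal{P}_H\subset\mathcal{P}_G$ (with $\mathcal{P}_H$ a set of vertices of $H$). A construction order is an ordering $v_1,\dots,v_l$ of $\mathcal{V}$ whose first $m$ entries are exactly the pinned vertices; for $i>m$ the back-degree of $v_i$ is the number of vertices among $v_1,\dots,v_{i-1}$ adjacent to $v_i$. $(G,\mathcal{P})$ is $k$-admissible ($k\ge0$ integer) if some construction order has all back-degrees (for $i>m$) at most $k$. *)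

From mathcomp Require Import all_boot.
Set Implicit Arguments. Unset Strict Implicit. Unset Printing Implicit Defensive.

(* A finite simple graph: vertex set V : {set T} inside a finite type T,
   adjacency e : rel T, symmetric and irreflexive (edges of the graph on V are
   the pairs of vertices of V related by e). *)
Definition simple_rel (T : finType) (e : rel T) : Prop :=
  symmetric e /\ irreflexive e.

Definition pinned_graph (T : finType) (e : rel T) (V P : {set T}) : Prop :=
  simple_rel e /\ P \subset V /\ {in P &, forall x y, ~~ e x y}.

(* (W, P_H) is a pinned subgraph of (V, P_G): the induced subgraph on W
   (same adjacency restricted to W), with P_H a subset of P_G and of W. *)
Definition pinned_subgraph (T : finType) (W PH V PG : {set T}) : Prop :=
  W \subset V /\ PH \subset PG /\ PH \subset W.

Definition construction_order (T : finType) (V P : {set T}) (s : seq T) : Prop :=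
  uniq s /\ (forall x, (x \in s) = (x \in V)) /\
  [set x in take #|P| s] = P.

Definition back_degree (T : finType) (e : rel T) (s : seq T) (x0 : T) (i : nat) : nat :=
  count (e (nth x0 s i)) (take i s).

Definition k_admissible (T : finType) (e : rel T) (V P : {set T}) (k : nat) : Prop :=
  exists s : seq T, construction_order V P s /\
    forall x0 i, #|P| <= i < size s -> back_degree e s x0 i <= k.

From mathcomp Require Import all_boot.
Set Implicit Arguments. Unset Strict Implicit. Unset Printing Implicit Defensive.

(* From a construction order s of G with back-degrees at most k, order H by
   listing first its pinned vertices and then its other vertices, both in the
   order of s; pinned vertices of H are pinned in G.  If an unpinned vertex x
   of H is pinned in G, then x lies among the first |P_G| vertices of s, so
   every vertex before x in the new order is pinned in G and x has no earlier
   neighbour.  Otherwise all of P_G precedes x in s, so every vertex before x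
   in the new order already preceded it in s, and the back-degree of x can
   only drop. *)

Definition predecessors (T : eqType) (s : seq T) (x : T) : seq T :=
  take (index x s) s.

Lemma count_uniq_subset (T : eqType) (p : pred T) (s1 s2 : seq T) :
  uniq s1 -> {subset s1 <= s2} -> count p s1 <= count p s2.
Proof.
move=> us1 s12; rewrite -!size_filter; apply: uniq_leq_size.
  exact: filter_uniq.
by move=> y; rewrite !mem_filter => /andP [-> /s12].
Qed.

Lemma predecessors_filter (T : eqType) (p : pred T) (s : seq T) (x : T) :
  p x -> predecessors (filter p s) x = filter p (predecessors s x).
Proof.
rewrite /predecessors => px; elim: s => [|y s IHs] //=.
have [->|neq_yx] := eqVneq y x; first by rewrite px /= eqxx.
by case: ifP => py /=; rewrite ?(negbTE neq_yx) py /= IHs.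
Qed.

Lemma predecessors_cat (T : eqType) (s1 s2 : seq T) (x : T) :
  x \notin s1 -> predecessors (s1 ++ s2) x = s1 ++ predecessors s2 x.
Proof.
move=> xs1; rewrite /predecessors index_cat (negbTE xs1).
by rewrite take_cat ltnNge leq_addr addKn.
Qed.

Section PinnedFirst.

Variables (T : finType) (V P : {set T}) (s : seq T).

Definition pinned_first : seq T :=
  [seq x <- s | x \in P] ++ [seq x <- s | x \in V :\: P].

Lemma construction_order_pinned_first :
  uniq s -> P \subset V -> {subset V <= s} -> construction_order V P pinned_first.
Proof.
move=> us PV Vs; have mem_P x : (x \in [seq x <- s | x \in P]) = (x \in P).
  by rewrite mem_filter andb_idr // => /(subsetP PV) /Vs.
have size_P : size [seq x <- s | x \in P] = #|P|.
  by rewrite -(card_uniqP (filter_uniq _ us)); apply: eq_card.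
split; last split.
- rewrite /pinned_first cat_uniq !filter_uniq //= andbT; apply/hasPn => x.
  by rewrite mem_filter mem_P inE => /andP [/andP []].
- move=> x; rewrite mem_cat mem_P mem_filter in_setD.
  case: (boolP (x \in P)) => [/(subsetP PV) -> // | _] /=.
  by rewrite andb_idr // => /Vs.
- by apply/setP => x; rewrite take_size_cat // inE mem_P.
Qed.

Lemma predecessors_pinned_first (x : T) : x \in V :\: P ->
  predecessors pinned_first x =
  [seq y <- s | y \in P] ++ [seq y <- predecessors s x | y \in V :\: P].
Proof.
move=> xVP; have [_ xNP] := setDP xVP.
by rewrite predecessors_cat ?predecessors_filter // mem_filter (negbTE xNP).
Qed.

End PinnedFirst.

Section ConstructionOrder.

Variables (T : finType) (V P : {set T}) (s : seq T).
Hypothesis order_s : construction_order V P s.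

Lemma construction_order_pinned_sub : P \subset V.
Proof.
case: order_s => [_ [mem_s pinned_s]]; apply/subsetP => x.
by rewrite -mem_s -pinned_s inE => /mem_take.
Qed.

Lemma construction_order_pinnedE (x : T) :
  x \in V -> (x \in P) = (index x s < #|P|).
Proof.
case: order_s => [_ [mem_s pinned_s]] xV.
by rewrite -{1}pinned_s inE in_take ?mem_s.
Qed.

Lemma predecessors_pinned (x : T) :
  x \in P -> {subset predecessors s x <= P}.
Proof.
case: order_s => [_ [mem_s _]] xP y ys.
have xV : x \in V := subsetP construction_order_pinned_sub x xP.
have yV : y \in V by rewrite -mem_s; apply: mem_take ys.
rewrite /predecessors in_take ?mem_s // in ys.
by rewrite construction_order_pinnedE // (ltn_trans ys) // -construction_order_pinnedE.
Qed.

Lemma pinned_predecessors (x : T) :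
  x \in V -> x \notin P -> {subset P <= predecessors s x}.
Proof.
case: order_s => [_ [mem_s _]] xV xNP y yP.
have yV : y \in V := subsetP construction_order_pinned_sub y yP.
rewrite /predecessors in_take ?mem_s //.
rewrite construction_order_pinnedE // -leqNgt in xNP.
by apply: leq_trans xNP; rewrite -construction_order_pinnedE.
Qed.

End ConstructionOrder.

Section BackDegree.

Variables (T : finType) (e : rel T).

Lemma back_degree_index (s : seq T) (x0 x : T) :
  x \in s -> back_degree e s x0 (index x s) = count (e x) (predecessors s x).
Proof. by move=> xs; rewrite /back_degree nth_index. Qed.

Lemma back_degree_boundP (s : seq T) (n k : nat) : uniq s ->
  (forall x0 i, n <= i < size s -> back_degree e s x0 i <= k) <->
  {in s, forall x, n <= index x s -> count (e x) (predecessors s x) <= k}.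
Proof.
move=> us; split=> [bound x xs le_n | bound x0 i /andP [le_n lt_i]].
  by rewrite -(back_degree_index x) // bound // le_n index_mem.
rewrite -(index_uniq x0 lt_i us) back_degree_index ?mem_nth //.
by apply: bound; rewrite ?mem_nth ?index_uniq.
Qed.

End BackDegree.

Lemma k_admissibleP (T : finType) (e : rel T) (V P : {set T}) (k : nat) :
  k_admissible e V P k <->
  exists s, construction_order V P s /\
    {in V :\: P, forall x, count (e x) (predecessors s x) <= k}.
Proof.
have in_V_P s x : construction_order V P s -> x \in s ->
    (x \in V :\: P) = (#|P| <= index x s).
  move=> order_s xs; have [_ [mem_s _]] := order_s; rewrite mem_s in xs.
  by rewrite in_setD xs andbT (construction_order_pinnedE order_s) // -leqNgt.
split=> [[s [order_s bound_s]] | [s [order_s bound_s]]]; exists s; split=> //.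
  have [us [mem_s _]] := order_s; move/(back_degree_boundP e _ _ us): bound_s.
  move=> bound_s x xVP; have xs : x \in s by rewrite mem_s; case/setDP: xVP.
  by apply: bound_s; rewrite // -(in_V_P s).
have [us _] := order_s; apply/(back_degree_boundP e _ _ us) => x xs le_P.
by apply: bound_s; rewrite (in_V_P s).
Qed.

Theorem lemma4p2 (T : finType) (e : rel T) (V PG W PH : {set T}) (k : nat) :
  pinned_graph e V PG ->
  pinned_subgraph W PH V PG ->
  k_admissible e V PG k ->
  k_admissible e W PH k.
Proof.
move=> [_ [_ indep_PG]] [WV [PH_PG PHW]] /k_admissibleP [s [order_s bound_s]].
have [us [mem_s _]] := order_s.
have Ws : {subset W <= s} by move=> x /(subsetP WV); rewrite mem_s.
set t := pinned_first W PH s.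
have order_t : construction_order W PH t by apply: construction_order_pinned_first.
apply/k_admissibleP; exists t; split=> // x xWH.
have [xW xNPH] := setDP xWH; have xV := subsetP WV x xW.
have pred_t y : y \in predecessors t x -> (y \in PH) || (y \in predecessors s x).
  rewrite predecessors_pinned_first // mem_cat !mem_filter.
  by case/orP => /andP [y_in y_in']; rewrite ?y_in ?y_in' ?orbT.
case: (boolP (x \in PG)) => [xPG | xNPG].
  have pred_t_PG : {subset predecessors t x <= PG}.
    by move=> y /pred_t /orP [/(subsetP PH_PG) | /(predecessors_pinned order_s xPG)].
  rewrite (@eq_in_count _ _ pred0) ?count_pred0 // => y /pred_t_PG yPG.
  exact/negbTE/indep_PG.
have pred_t_s : {subset predecessors t x <= predecessors s x}.
  move=> y /pred_t /orP [/(subsetP PH_PG) | //].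
  exact: (pinned_predecessors order_s xV xNPG).
apply: leq_trans (bound_s x _); last by rewrite in_setD xNPG.
by apply: count_uniq_subset pred_t_s; rewrite take_uniq //; case: order_t.
Qed.
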